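(* Let $\mathbf{M}$ be a nonsingular $D\times D$ integer matrix and $\bm{\Gamma}_1,\dots,\bm{\Gamma}_L$ ($L\ge2$) nonsingular $D\times D$ integer matrices that are pairwise commutative and coprime; set $\mathbf{M}_i=\mathbf{M}\bm{\Gamma}_i$. Fix unimodular $\mathbf{U}_1$ and let $\mathbf{m}\in\mathcal{A}_1$ with remainders $\mathbf{r}_i=\langle\mathbf{m}\rangle_{\mathbf{M}_i}$ and folding vectors $\mathbf{n}_i$ (so $\mathbf{m}=\mathbf{M}_i\mathbf{n}_i+\mathbf{r}_i$). Let $\widetilde{\mathbf{r}}_i=\mathbf{r}_i+\triangle\mathbf{r}_i\in\mathbb{Z}^D$ be erroneous remainders, and let $\widetilde{\mathbf{n}}_1,\dots,\widetilde{\mathbf{n}}_L$ be the output of Algorithm 1 applied to $\widetilde{\mathbf{r}}_1,\dots,\widetilde{\mathbf{r}}_L$. Define $\bm{\theta}_i=Q_{\mathbf{M}}(\triangle\mathbf{r}_i-\triangle\mathbf{r}_1)$ for $2\le i\le L$. Then $\widetilde{\mathbf{n}}_i=\mathbf{n}_i$ for all $1\le i\le L$ if and only if $\bm{\theta}_i=\mathbf{0}$ for all $2\le i\le L$. Moreover: (1) if $\lVert\triangle\mathbf{r}_i-\triangle\mathbf{r}_1\rVert<\lambda_{\mathrm{LAT}(\mathbf{M})}/2$ for all $2\le i\le L$, then $\bm{\theta}_i=\mathbf{0}$ for all $i\ge2$; (2) if $\lVert\triangle\mathbf{r}_i\rVert\le\tau$ for all $i$ and $\tau<\lambda_{\mathrm{LAT}(\mathbf{M})}/4$,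 then $\bm{\theta}_i=\mathbf{0}$ for all $i\ge2$. When the folding vectors are correctly determined, $\widetilde{\mathbf{m}}=\frac1L\sum_{i=1}^L(\mathbf{M}_i\mathbf{n}_i+\widetilde{\mathbf{r}}_i)$ satisfies $\lVert\widetilde{\mathbf{m}}-\mathbf{m}\rVert\le\tau$ whenever $\lVert\triangle\mathbf{r}_i\rVert\le\tau$ for all $i$.
   Context: All matrices are $D\times D$; unimodular means integer with determinant $\pm1$; commuting nonsingular integer matrices are coprime if all their common left (equivalently right) divisors are unimodular. $\mathrm{LAT}(\mathbf{M})=\{\mathbf{M}\mathbf{n}:\mathbf{n}\in\mathbb{Z}^D\}$. $\mathcal{N}(\mathbf{A})=\{\mathbf{k}\in\mathbb{Z}^D:\mathbf{k}=\mathbf{A}\mathbf{x},\ \mathbf{x}\in[0,1)^D\}$; $\langle\mathbf{m}\rangle_{\mathbf{A}}$ is the unique $\mathbf{r}\in\mathcal{N}(\mathbf{A})$ with $\mathbf{m}-\mathbf{r}\in\mathrm{LAT}(\mathbf{A})$; $\mathbf{x}\equiv\mathbf{y}\bmod\mathbf{A}$ means $\mathbf{x}-\mathbf{y}\in\mathrm{LAT}(\mathbf{A})$. $\mathcal{A}_1=\{\mathbf{m}\in\mathbb{Z}^D:\lfloor\mathbf{M}_1^{-1}\mathbf{m}\rfloor\in\mathcal{N}(\bm{\Gamma}_2\bm{\Gamma}_3\cdots\bm{\Gamma}_L\mathbf{U}_1)\}$ (componentwise floor). $\lVert\cdot\rVert$ is a fixed norm on $\mathbb{R}^D$; $\lambda_{\mathrm{LAT}(\mathbf{M})}=\min\{\lVert\mathbf{v}\rVert:\mathbf{v}\in\mathrm{LAT}(\mathbf{M})\setminus\{\mathbf{0}\}\}$.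 $Q_{\mathbf{M}}:\mathbb{R}^D\to\mathrm{LAT}(\mathbf{M})$ is a fixed closest-lattice-point map, $Q_{\mathbf{M}}(\mathbf{w})\in\arg\min_{\mathbf{v}\in\mathrm{LAT}(\mathbf{M})}\lVert\mathbf{v}-\mathbf{w}\rVert$, chosen so that $Q_{\mathbf{M}}(\mathbf{w}+\mathbf{l})=Q_{\mathbf{M}}(\mathbf{w})+\mathbf{l}$ for $\mathbf{l}\in\mathrm{LAT}(\mathbf{M})$. Algorithm 1: (i) $\mathbf{v}_i=Q_{\mathbf{M}}(\widetilde{\mathbf{r}}_i-\widetilde{\mathbf{r}}_1)$, $2\le i\le L$; (ii) $\bm{\zeta}_i=\langle\mathbf{M}^{-1}\mathbf{v}_i\rangle_{\bm{\Gamma}_i}$; (iii) $\bm{\chi}_1$ is the unique element of $\mathcal{N}(\bm{\Gamma}_1\bm{\Gamma}_2\cdots\bm{\Gamma}_L\mathbf{U}_1)$ with $\bm{\chi}_1\equiv\mathbf{0}\bmod\bm{\Gamma}_1$ and $\bm{\chi}_1\equiv\bm{\zeta}_i\bmod\bm{\Gamma}_i$ for $2\le i\le L$; (iv) $\widetilde{\mathbf{n}}_1=\bm{\Gamma}_1^{-1}\bm{\chi}_1$ and $\widetilde{\mathbf{n}}_i=\bm{\Gamma}_i^{-1}(\bm{\chi}_1-\mathbf{M}^{-1}\mathbf{v}_i)$ for $2\le i\le L$. *)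

From HB Require Import structures.
From mathcomp Require Import all_boot all_order all_algebra.
Set Implicit Arguments. Unset Strict Implicit. Unset Printing Implicit Defensive.
Import Order.TTheory GRing.Theory Num.Theory.
Local Open Scope ring_scope.

Definition intm (R : numDomainType) m n (A : 'M[int]_(m, n)) : 'M[R]_(m, n) :=
  map_mx (fun z : int => z%:~R) A.

Definition unimodular D (U : 'M[int]_D) : Prop := \det U = 1 \/ \det U = -1.

Definition ldivides D (X A : 'M[int]_D) : Prop := exists Y : 'M[int]_D, A = X *m Y.

Definition coprime_mx D (A B : 'M[int]_D) : Prop :=
  forall X : 'M[int]_D, ldivides X A -> ldivides X B -> unimodular X.

Definition in_lat D (A : 'M[int]_D) (v : 'cV[int]_D) : Prop :=
  exists n : 'cV[int]_D, v = A *m n.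

Definition congr_mx D (A : 'M[int]_D) (x y : 'cV[int]_D) : Prop := in_lat A (x - y).

Definition in_N D (A : 'M[int]_D) (k : 'cV[int]_D) : Prop :=
  exists x : 'cV[rat]_D, (forall i, 0 <= x i 0 /\ x i 0 < 1) /\
    intm rat k = intm rat A *m x.

(* r = <m>_A : r \in N(A) and m - r \in LAT(A) (r is unique) *)
Definition is_rem D (A : 'M[int]_D) (m r : 'cV[int]_D) : Prop :=
  in_N A r /\ in_lat A (m - r).

Definition floor_vec D (x : 'cV[rat]_D) : 'cV[int]_D := map_mx (@Num.floor rat) x.

(* ordered product Gamma_a Gamma_(a+1) ... Gamma_b *)
Definition prod_mx D (G : nat -> 'M[int]_D) (a b : nat) : 'M[int]_D :=
  foldr (fun i P => G i *m P) 1%:M (iota a (b.+1 - a)).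

Definition in_A1 D L (M : 'M[int]_D) (G : nat -> 'M[int]_D) (U1 : 'M[int]_D)
  (m : 'cV[int]_D) : Prop :=
  in_N (prod_mx G 2 L *m U1)
       (floor_vec (invmx (intm rat (M *m G 1%N)) *m intm rat m)).

Definition is_norm (R : realFieldType) D (nrm : 'cV[R]_D -> R) : Prop :=
  (forall v, 0 <= nrm v) /\ (forall v, nrm v = 0 -> v = 0) /\
  (forall (a : R) v, nrm (a *: v) = `|a| * nrm v) /\
  (forall u v, nrm (u + v) <= nrm u + nrm v).

Definition is_min_dist (R : realFieldType) D (nrm : 'cV[R]_D -> R)
  (M : 'M[int]_D) (lam : R) : Prop :=
  (exists v, in_lat M v /\ v != 0 /\ nrm (intm R v) = lam) /\
  (forall v, in_lat M v -> v != 0 -> lam <= nrm (intm R v)).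

(* Q_M : R^D -> LAT(M) closest lattice point map, translation-equivariant.
   (LAT(M) is a subset of Z^D, so Q_M takes values in integer vectors.) *)
Definition is_closest_map (R : realFieldType) D (nrm : 'cV[R]_D -> R)
  (M : 'M[int]_D) (Q : 'cV[R]_D -> 'cV[int]_D) : Prop :=
  (forall w, in_lat M (Q w)) /\
  (forall w l, in_lat M l -> nrm (intm R (Q w) - w) <= nrm (intm R l - w)) /\
  (forall w l, in_lat M l -> Q (w + intm R l) = Q w + l).

(* tn_1..tn_L is the output of Algorithm 1 on erroneous remainders tr_1..tr_L.
   w i stands for M^{-1} v_i (an integer vector since v_i \in LAT(M)). *)
Definition alg1_output (R : realFieldType) D L (M : 'M[int]_D)
  (G : nat -> 'M[int]_D) (U1 : 'M[int]_D) (Q : 'cV[R]_D -> 'cV[int]_D)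
  (tr tn : nat -> 'cV[int]_D) : Prop :=
  exists (w zeta : nat -> 'cV[int]_D) (chi : 'cV[int]_D),
    (forall i, (2 <= i <= L)%N -> M *m w i = Q (intm R (tr i - tr 1%N))) /\
    (forall i, (2 <= i <= L)%N -> is_rem (G i) (w i) (zeta i)) /\
    in_N (prod_mx G 1 L *m U1) chi /\
    congr_mx (G 1%N) chi 0 /\
    (forall i, (2 <= i <= L)%N -> congr_mx (G i) chi (zeta i)) /\
    G 1%N *m tn 1%N = chi /\
    (forall i, (2 <= i <= L)%N -> G i *m tn i = chi - w i).

From HB Require Import structures.
From mathcomp Require Import all_boot all_order all_algebra.
From mathcomp Require Import zify ring lra.
Set Implicit Arguments. Unset Strict Implicit. Unset Printing Implicit Defensive.
Import Order.TTheory GRing.Theory Num.Theory.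
Local Open Scope ring_scope.

(* With e_i = Γ_1 n_1 - Γ_i n_i the exact remainders satisfy
   r̃_i - r̃_1 = (Δr_i - Δr_1) + M e_i, so by translation equivariance of Q_M
   step (i) of Algorithm 1 returns v_i = θ_i + M e_i.  Thus θ_i = 0 iff
   M^{-1} v_i = e_i, and then Γ_1 n_1 solves the congruence system of step (iii).
   It lies in N(Γ_1⋯Γ_L U_1) because m ∈ A_1, and a Chinese remainder theorem
   for pairwise coprime commuting matrices (from a Bezout identity read off the
   Smith normal form) makes that solution unique, so χ_1 = Γ_1 n_1 and step (iv)
   returns the n_i.  The error bounds follow from Q_M(w) = 0 for ‖w‖ < λ/2 and
   from the convexity of norm balls. *)

Section IntegerMatrices.
Variable R : numDomainType.

Lemma intmD m n (A B : 'M[int]_(m, n)) : intm R (A + B) = intm R A + intm R B.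
Proof. exact: map_mxD. Qed.

Lemma intmB m n (A B : 'M[int]_(m, n)) : intm R (A - B) = intm R A - intm R B.
Proof. by rewrite intmD /intm map_mxN. Qed.

Lemma intmM m n p (A : 'M[int]_(m, n)) (B : 'M[int]_(n, p)) :
  intm R (A *m B) = intm R A *m intm R B.
Proof. exact: map_mxM. Qed.

Lemma det_intm n (A : 'M[int]_n) : \det (intm R A) = (\det A)%:~R.
Proof. exact: det_map_mx. Qed.

End IntegerMatrices.

Lemma mulmxI_det (R : idomainType) n p (A : 'M[R]_n) (x y : 'M[R]_(n, p)) :
  \det A != 0 -> A *m x = A *m y -> x = y.
Proof.
move=> dA /(congr1 (mulmx (\adj A))); rewrite !mulmxA mul_adj_mx !mul_scalar_mx.
move/matrixP=> exy; apply/matrixP=> i j; move: (exy i j); rewrite !mxE.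
exact: mulfI.
Qed.

Lemma unimodular_unitmx D (U : 'M[int]_D) : unimodular U -> U \in unitmx.
Proof. by rewrite unitmxE; case=> ->; rewrite ?unitr1 ?unitrN1. Qed.

Lemma unimodular_det_neq0 D (U : 'M[int]_D) : unimodular U -> \det U != 0.
Proof. by case=> ->; rewrite ?oppr_eq0 oner_neq0. Qed.

Section Lattices.
Variable D : nat.
Implicit Types (A P U : 'M[int]_D) (x y z : 'cV[int]_D).

Lemma in_lat_mul A k : in_lat A (A *m k).
Proof. by exists k. Qed.

Lemma congr_mx_sym A x y : congr_mx A x y -> congr_mx A y x.
Proof. by case=> k e; exists (- k); rewrite mulmxN -e opprB. Qed.

Lemma congr_mx_trans A x y z :
  congr_mx A x y -> congr_mx A y z -> congr_mx A x z.
Proof.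
case=> k ek [l el]; exists (k + l).
by rewrite mulmxDr -ek -el addrA subrK.
Qed.

Lemma congr_mx_subr_mul A x k : congr_mx A (x - A *m k) x.
Proof. by exists (- k); rewrite addrAC subrr add0r mulmxN. Qed.

Lemma in_lat_mulmx_unimodular P U x :
  unimodular U -> in_lat P x -> in_lat (P *m U) x.
Proof.
move=> /unimodular_unitmx uU [k ->]; exists (invmx U *m k).
by rewrite -mulmxA mulKVmx.
Qed.

Lemma in_N_mull A P x : in_N P x -> in_N (A *m P) (A *m x).
Proof. by case=> u [hu eu]; exists u; split; rewrite // !intmM eu mulmxA. Qed.

(* x - y = P (u - v) with u - v ∈ (-1,1)^D, and an integral vector there is 0. *)
Lemma in_N_congr_eq P x y :
  \det P != 0 -> in_N P x -> in_N P y -> congr_mx P x y -> x = y.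
Proof.
move=> dP [u [hu eu]] [v [hv ev]] [k ek].
have dPq : \det (intm rat P) != 0 by rewrite det_intm intr_eq0.
have ek' : intm rat k = u - v.
  by apply: (mulmxI_det dPq); rewrite -intmM -ek intmB eu ev mulmxBr.
suff k0 : k = 0 by apply/eqP; rewrite -subr_eq0 ek k0 mulmx0.
apply/matrixP => i j; rewrite (ord1 j) mxE.
move/matrixP/(_ i 0): ek'; rewrite !mxE => eki.
have [hu0 hu1] := hu i; have [hv0 hv1] := hv i.
have : k i 0 < 1 by rewrite -(ltr_int rat) eki rmorph1; lra.
have : -1 < k i 0 by rewrite -(ltr_int rat) eki rmorphN1; lra.
lia.
Qed.

Lemma floor_vec_quotient A q r :
  \det A != 0 -> in_N A r ->
  floor_vec (invmx (intm rat A) *m intm rat (A *m q + r)) = q.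
Proof.
move=> dA [x [hx ex]].
have uA : intm rat A \in unitmx by rewrite unitmxE unitfE det_intm intr_eq0.
rewrite intmD intmM ex -mulmxDr mulKmx //.
apply/matrixP => a b; rewrite !mxE (ord1 b).
have [hx0 hx1] := hx a.
by apply: floor_def; rewrite rmorphD rmorph1 /=; apply/andP; split; lra.
Qed.

End Lattices.

(* The Smith form [A B] = P [S 0] R exhibits X0 = P S as a common left divisor
   of A and B, hence unimodular; the first block column of R^-1 then inverts
   [A B] on the right up to X0. *)
Lemma coprime_mx_bezout D (A B : 'M[int]_D) :
  coprime_mx A B -> exists X Y, A *m X + B *m Y = 1%:M.
Proof.
move=> cAB.
have [P uP [Rm uR [d _ eC]]] := int_Smith_normal_form (row_mx A B).
set S1 : 'M[int]_D := \matrix_(i, j) (d`_i *+ (i == j :> nat)).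
have eS : (\matrix_(i, j) (d`_i *+ (i == j :> nat)) : 'M[int]_(D, D + D))
   = S1 *m row_mx 1%:M 0.
  rewrite mul_mx_row mulmx1 mulmx0; apply/matrixP=> i j; rewrite !mxE.
  case: splitP => k ->; rewrite !mxE //.
  by rewrite ltn_eqF ?mulr0n // ltn_addr.
set X0 := P *m S1; set Rt := row_mx 1%:M 0 *m Rm.
have eAB : row_mx A B = X0 *m Rt by rewrite eC eS !mulmxA.
have uX : X0 \in unitmx.
  apply/unimodular_unitmx/cAB.
    by exists (lsubmx Rt); rewrite mulmx_lsub -eAB row_mxKl.
  by exists (rsubmx Rt); rewrite mulmx_rsub -eAB row_mxKr.
set Z := invmx Rm *m col_mx 1%:M (0 : 'M[int]_D).
have eRZ : Rt *m Z = 1%:M.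
  by rewrite mulmxA -(mulmxA _ Rm) mulmxV // mulmx1 mul_row_col mulmx1 mul0mx addr0.
exists (usubmx (Z *m invmx X0)), (dsubmx (Z *m invmx X0)).
by rewrite -mul_row_col vsubmxK eAB mulmxA -(mulmxA X0) eRZ mulmx1 mulmxV.
Qed.

(* Gauss's lemma: W = [X -B; Y A] is unimodular and [A B] W = [1 0], so every
   integral solution of A a - B b = 0 is W applied to a vector (0, c). *)
Lemma coprime_mx_Gauss D (A B : 'M[int]_D) (a b : 'cV[int]_D) :
  \det A != 0 -> A *m B = B *m A -> coprime_mx A B ->
  A *m a = B *m b -> in_lat B a.
Proof.
move=> dA cAB /coprime_mx_bezout [X [Y eXY]] eab.
set W := block_mx X (- B) Y A.
have eW : block_mx A B 0 1%:M *m W = block_mx 1%:M 0 Y A.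
  by rewrite mulmx_block !mul0mx !mul1mx !add0r eXY mulmxN cAB addNr.
have uW : W \in unitmx.
  have := congr1 determinant eW.
  rewrite det_mulmx det_ublock det_lblock det1 mulr1 mul1r => edet.
  have dW : \det W = 1 by apply: (mulfI dA); rewrite edet mulr1.
  by rewrite unitmxE dW unitr1.
have hRW : row_mx A B *m W = row_mx 1%:M 0.
  by rewrite mul_row_block eXY mulmxN cAB addNr.
set u := invmx W *m col_mx a (- b).
have ezu : col_mx a (- b) = W *m u by rewrite mulmxA mulmxV // mul1mx.
have u1 : usubmx u = 0.
  have : row_mx A B *m col_mx a (- b) = 0 by rewrite mul_row_col eab mulmxN subrr.
  by rewrite ezu mulmxA hRW -[u]vsubmxK mul_row_col mul1mx mul0mx addr0 vsubmxK.
exists (- dsubmx u).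
have : col_mx a (- b) = W *m col_mx 0 (dsubmx u) by rewrite -u1 vsubmxK.
rewrite mul_block_col !mulmx0 !add0r => /eq_col_mx [-> _].
by rewrite mulNmx mulmxN.
Qed.

Section OrderedProducts.
Variables (D : nat) (I : eqType) (G : I -> 'M[int]_D).

Local Notation prod_seq s := (foldr (fun i P => G i *m P) 1%:M s).

Lemma det_prod_seq (s : seq I) : \det (prod_seq s) = \prod_(i <- s) \det (G i).
Proof.
elim: s => [|i s IHs] /=; first by rewrite big_nil det1.
by rewrite big_cons det_mulmx IHs.
Qed.

Lemma in_lat_prod_seq (s : seq I) d :
  uniq s -> {in s, forall i, \det (G i) != 0} ->
  {in s &, forall i j, G i *m G j = G j *m G i} ->
  {in s &, forall i j, i != j -> coprime_mx (G i) (G j)} ->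
  {in s, forall i, in_lat (G i) d} -> in_lat (prod_seq s) d.
Proof.
elim: s d => [|k s IHs] d /=; first by move=> *; exists d; rewrite mul1mx.
case/andP=> ks us dG cG pG hd.
have ss : {subset s <= k :: s} by move=> j sj; rewrite inE sj orbT.
have [a ea] := hd k (mem_head k s).
have ha : {in s, forall i, in_lat (G i) a}.
  move=> i si; have [b eb] := hd i (ss i si).
  have ki : k != i by apply: contraNneq ks => ->.
  have [sk si'] := (mem_head k s, ss i si).
  apply: (coprime_mx_Gauss (b := b) (dG k sk) (cG k i sk si') (pG k i sk si' ki)).
  by rewrite -ea.
have [c ec] := IHs a us
  (sub_in1 ss dG) (sub_in2 ss cG) (sub_in2 ss pG) ha.
by exists c; rewrite ea ec mulmxA.
Qed.

End OrderedProducts.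

Lemma prod_mxS D (G : nat -> 'M[int]_D) k L :
  (k <= L)%N -> prod_mx G k L = G k *m prod_mx G k.+1 L.
Proof. by move=> kL; rewrite /prod_mx subSS subSn. Qed.

Section Norms.
Variables (R : realFieldType) (D : nat) (nrm : 'cV[R]_D -> R).
Hypothesis hnrm : is_norm nrm.

Lemma nrmZ a v : nrm (a *: v) = `|a| * nrm v.
Proof. by case: hnrm => _ [_ []]. Qed.

Lemma nrmN v : nrm (- v) = nrm v.
Proof. by rewrite -scaleN1r nrmZ normrN1 mul1r. Qed.

Lemma nrmD u v : nrm (u + v) <= nrm u + nrm v.
Proof. by case: hnrm => _ [_ []]. Qed.

Lemma nrmB u v : nrm (u - v) <= nrm u + nrm v.
Proof. by rewrite -(nrmN v) nrmD. Qed.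

Lemma nrm_sum (I : Type) (s : seq I) (F : I -> 'cV[R]_D) :
  nrm (\sum_(i <- s) F i) <= \sum_(i <- s) nrm (F i).
Proof.
elim: s => [|i s IHs]; first by rewrite !big_nil -(scale0r 0) nrmZ normr0 mul0r.
by rewrite !big_cons (le_trans (nrmD _ _)) // lerD2l.
Qed.

Lemma nrm_mean_le (I : eqType) (s : seq I) (x : I -> 'cV[R]_D) y tau :
  s != [::] -> {in s, forall i, nrm (x i - y) <= tau} ->
  nrm ((size s)%:R^-1 *: \sum_(i <- s) x i - y) <= tau.
Proof.
move=> s0 hx; have sz : (0 : R) < (size s)%:R by rewrite ltr0n lt0n size_eq0.
have -> : (size s)%:R^-1 *: \sum_(i <- s) x i - y
    = (size s)%:R^-1 *: \sum_(i <- s) (x i - y).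
  rewrite big_split /= sumrN big_const_seq count_predT iter_addr_0 -scaler_nat.
  by rewrite scalerDr scalerN scalerA mulVf ?gt_eqF // scale1r.
rewrite nrmZ ger0_norm ?invr_ge0 ?ler0n // ler_pdivrMl // mulr_natl.
rewrite -iter_addr_0 -(count_predT s) -big_const_seq (le_trans (nrm_sum _ _)) //.
by rewrite !big_seq; apply: ler_sum => i /hx.
Qed.

Variables (M : 'M[int]_D) (Q : 'cV[R]_D -> 'cV[int]_D) (lam : R).
Hypotheses (hQ : is_closest_map nrm M Q) (hlam : is_min_dist nrm M lam).

(* Q w is at least as close to w as the lattice point 0, so a nonzero Q w
   would have norm at most 2 ‖w‖ < λ. *)
Lemma closest_map_eq0 w : nrm w < lam / 2 -> Q w = 0.
Proof.
move=> hw; case: hQ => hQ1 [hQ2 _]; case: hlam => _ hl.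
apply: contraTeq hw => /(hl _ (hQ1 w)) hQw; rewrite -leNgt.
have := hQ2 w _ (in_lat_mul M 0); rewrite mulmx0 /intm map_mx0 sub0r nrmN.
have := nrmD (intm R (Q w) - w) w; rewrite subrK; lra.
Qed.

End Norms.

Section FoldingVectors.
Variables (R : realFieldType) (D L : nat) (M U1 : 'M[int]_D) (G : nat -> 'M[int]_D).
Hypotheses (hL : (1 <= L)%N) (hM : \det M != 0)
  (hG : forall i, (1 <= i <= L)%N -> \det (G i) != 0)
  (hcomm : forall i j, (1 <= i <= L)%N -> (1 <= j <= L)%N -> G i *m G j = G j *m G i)
  (hcop : forall i j, (1 <= i <= L)%N -> (1 <= j <= L)%N -> i != j ->
            coprime_mx (G i) (G j))
  (hU1 : unimodular U1).
Variables (m : 'cV[int]_D) (r n : nat -> 'cV[int]_D).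
Hypotheses (hm : in_A1 L M G U1 m) (hr1 : in_N (M *m G 1%N) (r 1%N))
  (hn : forall i, (1 <= i <= L)%N -> m = (M *m G i) *m n i + r i).
Variables (Q : 'cV[R]_D -> 'cV[int]_D) (tr tn w zeta : nat -> 'cV[int]_D).
Variable chi : 'cV[int]_D.
Hypotheses (hQ : forall v l, in_lat M l -> Q (v + intm R l) = Q v + l)
  (hw : forall i, (2 <= i <= L)%N -> M *m w i = Q (intm R (tr i - tr 1%N)))
  (hzeta : forall i, (2 <= i <= L)%N -> is_rem (G i) (w i) (zeta i))
  (hchi : in_N (prod_mx G 1 L *m U1) chi)
  (hchi1 : congr_mx (G 1%N) chi 0)
  (hchii : forall i, (2 <= i <= L)%N -> congr_mx (G i) chi (zeta i))
  (htn1 : G 1%N *m tn 1%N = chi)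
  (htni : forall i, (2 <= i <= L)%N -> G i *m tn i = chi - w i).

Local Notation dr i := (tr i - r i).
Local Notation theta i := (Q (intm R (dr i - dr 1%N))).
Local Notation e i := (G 1%N *m n 1%N - G i *m n i).

Lemma remainder_diffE i :
  (1 <= i <= L)%N -> tr i - tr 1%N = (dr i - dr 1%N) + M *m e i.
Proof.
move=> hi; have eX k : (1 <= k <= L)%N -> M *m G k *m n k = m - r k.
  by move=> hk; rewrite [m](hn hk) addrK.
rewrite mulmxBr !mulmxA eX ?eX ?lexx //.
by apply/matrixP=> a b; rewrite !mxE; ring.
Qed.

Lemma Mw_thetaE i : (2 <= i <= L)%N -> M *m w i = theta i + M *m e i.
Proof.
move=> hi; rewrite hw // remainder_diffE; last by case/andP: hi => /ltnW ->.
by rewrite intmD hQ //; exact: in_lat_mul.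
Qed.

Lemma w_exactE i : (2 <= i <= L)%N -> w i = e i <-> theta i = 0.
Proof.
move=> hi; split=> [we | t0].
  by apply: (addIr (M *m e i)); rewrite add0r -Mw_thetaE // we.
by apply: (mulmxI_det hM); rewrite Mw_thetaE // t0 add0r.
Qed.

Lemma chi_exact : (forall i, (2 <= i <= L)%N -> w i = e i) -> chi = G 1%N *m n 1%N.
Proof.
move=> we; have hG1 : \det (G 1%N) != 0 by rewrite hG ?lexx.
have mem1L i : (i \in iota 1 (L.+1 - 1)) = (1 <= i <= L)%N.
  by rewrite mem_iota subSS subn0 add1n ltnS.
apply: (in_N_congr_eq _ hchi).
- rewrite det_mulmx mulf_neq0 ?(unimodular_det_neq0 hU1) //.
  rewrite /prod_mx det_prod_seq prodf_seq_neq0.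
  by apply/allP=> i; rewrite mem1L => /hG.
- rewrite (prod_mxS _ hL) -mulmxA; apply: in_N_mull.
  rewrite -(floor_vec_quotient (n 1%N) _ hr1) -?hn ?lexx //.
  by rewrite det_mulmx mulf_neq0.
apply: in_lat_mulmx_unimodular hU1 _.
apply: in_lat_prod_seq.
- exact: iota_uniq.
- by move=> i; rewrite mem1L; apply: hG.
- by move=> i j; rewrite !mem1L; apply: hcomm.
- by move=> i j; rewrite !mem1L; apply: hcop.
move=> i; rewrite mem1L => hi; have [-> | i1] := eqVneq i 1%N.
  apply: congr_mx_trans hchi1 _.
  by have := congr_mx_subr_mul (G 1%N) (G 1%N *m n 1%N) (n 1%N); rewrite subrr.
have hi2 : (2 <= i <= L)%N by lia.
apply: congr_mx_trans (hchii hi2) _; apply: congr_mx_trans (congr_mx_sym (hzeta hi2).2) _.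
by rewrite we //; apply: congr_mx_subr_mul.
Qed.

Lemma folding_vectors_exactE :
  (forall i, (1 <= i <= L)%N -> tn i = n i) <-> (forall i, (2 <= i <= L)%N -> theta i = 0).
Proof.
split=> [htn i hi | ht].
  apply/(w_exactE hi).
  have tn1 : tn 1%N = n 1%N by apply: htn; lia.
  have tni : tn i = n i by apply: htn; lia.
  by rewrite -tn1 -tni htn1 htni // opprB addrC subrK.
have we i : (2 <= i <= L)%N -> w i = e i by move=> hi; apply/(w_exactE hi)/ht.
move=> i hi; apply: (mulmxI_det (hG hi)); have [-> | i1] := eqVneq i 1%N.
  by rewrite htn1 chi_exact.
have hi2 : (2 <= i <= L)%N by lia.
by rewrite htni // chi_exact // we // opprB addrC subrK.
Qed.

End FoldingVectors.

Theorem theorem3 (R : realFieldType) (D L : nat) (hL : (2 <= L)%N)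
  (M : 'M[int]_D) (G : nat -> 'M[int]_D) (U1 : 'M[int]_D)
  (hM : \det M != 0)
  (hG : forall i, (1 <= i <= L)%N -> \det (G i) != 0)
  (hcomm : forall i j, (1 <= i <= L)%N -> (1 <= j <= L)%N -> G i *m G j = G j *m G i)
  (hcop : forall i j, (1 <= i <= L)%N -> (1 <= j <= L)%N -> i != j ->
            coprime_mx (G i) (G j))
  (hU1 : unimodular U1)
  (m : 'cV[int]_D) (hm : in_A1 L M G U1 m)
  (r n : nat -> 'cV[int]_D)
  (hr : forall i, (1 <= i <= L)%N -> is_rem (M *m G i) m (r i))
  (hn : forall i, (1 <= i <= L)%N -> m = (M *m G i) *m n i + r i)
  (tr tn : nat -> 'cV[int]_D)
  (nrm : 'cV[R]_D -> R) (hnrm : is_norm nrm)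
  (Q : 'cV[R]_D -> 'cV[int]_D) (hQ : is_closest_map nrm M Q)
  (lam : R) (hlam : is_min_dist nrm M lam)
  (halg : alg1_output L M G U1 Q tr tn) :
  let dr := fun i => tr i - r i in
  let theta := fun i => Q (intm R (dr i - dr 1%N)) in
  ((forall i, (1 <= i <= L)%N -> tn i = n i) <->
   (forall i, (2 <= i <= L)%N -> theta i = 0)) /\
  ((forall i, (2 <= i <= L)%N -> nrm (intm R (dr i - dr 1%N)) < lam / 2) ->
   forall i, (2 <= i <= L)%N -> theta i = 0) /\
  (forall tau : R, (forall i, (1 <= i <= L)%N -> nrm (intm R (dr i)) <= tau) ->
   tau < lam / 4 -> forall i, (2 <= i <= L)%N -> theta i = 0) /\
  (forall tau : R, (forall i, (1 <= i <= L)%N -> nrm (intm R (dr i)) <= tau) ->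
   let tm := (L%:R)^-1 *: \sum_(1 <= i < L.+1) intm R ((M *m G i) *m n i + tr i) in
   nrm (tm - intm R m) <= tau).
Proof.
move=> dr theta.
have hL1 : (1 <= L)%N by apply: ltnW.
have theta0 := closest_map_eq0 hnrm hQ hlam.
case: halg => w [zeta [chi [hw [hzeta [hchi [hchi1 [hchii [htn1 htni]]]]]]]].
split.
  exact: (folding_vectors_exactE hL1 hM hG hcomm hcop hU1 hm (hr 1%N hL1).1 hn
           hQ.2.2 hw hzeta hchi hchi1 hchii htn1 htni).
split; first by move=> hdr i hi; apply/theta0/hdr.
split=> tau hdr.
  move=> htau i hi; apply: theta0; rewrite intmB.
  have := nrmB hnrm (intm R (dr i)) (intm R (dr 1%N)).
  have : nrm (intm R (dr i)) <= tau by apply: hdr; lia.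
  have : nrm (intm R (dr 1%N)) <= tau by apply: hdr; lia.
  lra.
cbv zeta; have := nrm_mean_le hnrm (s := index_iota 1 L.+1)
  (x := fun i => intm R ((M *m G i) *m n i + tr i)) (y := intm R m) (tau := tau).
rewrite size_iota subSS subn0; apply; first by rewrite -size_eq0 size_iota; lia.
move=> i; rewrite mem_index_iota ltnS => hi.
by rewrite -intmB {1}(hn i hi) opprD addrACA subrr add0r; apply: hdr.
Qed.
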